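(* Let $m\ge 38$ and let $G$ be a graph with maximum spectral radius among all $H(4,3)$-free graphs with $m$ edges and no isolated vertices (such a $G$ is connected). Let $\mathbf{x}$ be the Perron vector of $A(G)$, let $u^*$ be a vertex with $x_{u^*} = \max_{u\in V(G)} x_u$, and let $W = V(G)\setminus N[u^*]$. Then $d(w)\ge 2$ for every $w\in W$.
   Context: All graphs are simple and undirected; $A(G)$ is the adjacency matrix, $\rho(G)$ its largest eigenvalue, and the Perron vector is the unique positive unit eigenvector for $\rho(G)$ of a connected graph. $H(4,3)$ is the graph formed by a cycle of length $4$ and a triangle sharing exactly one common vertex. $N(v)$ is the neighbourhood of $v$, $N[v]=N(v)\cup\{v\}$, and $d(v)$ is the degree of $v$. *)

From HB Require Import structures.
From mathcomp Require Import all_boot all_order all_algebra.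
From mathcomp Require Import reals.
Set Implicit Arguments. Unset Strict Implicit. Unset Printing Implicit Defensive.
Import Order.TTheory GRing.Theory Num.Theory.
Local Open Scope ring_scope.

Definition simple_graph (n : nat) (e : rel 'I_n) : Prop :=
  symmetric e /\ irreflexive e.

Definition nedges (n : nat) (e : rel 'I_n) : nat :=
  #|[set p : 'I_n * 'I_n | (p.1 < p.2)%N && e p.1 p.2]|.

Definition deg (n : nat) (e : rel 'I_n) (v : 'I_n) : nat := #|[set w | e v w]|.

Definition no_isolated (n : nat) (e : rel 'I_n) : Prop := forall v, (0 < deg e v)%N.

Definition closed_nbhd (n : nat) (e : rel 'I_n) (v : 'I_n) : {set 'I_n} :=
  v |: [set w | e v w].

(* H(4,3): C4 on 0-1-2-3-0 and triangle 0-4-5-0, sharing vertex 0 *)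
Definition H43_edges : seq (nat * nat) :=
  [:: (0,1); (1,2); (2,3); (3,0); (0,4); (4,5); (5,0)]%N.

Definition H43 : rel 'I_6 :=
  fun a b => ((nat_of_ord a, nat_of_ord b) \in H43_edges)
          || ((nat_of_ord b, nat_of_ord a) \in H43_edges).

Definition contains_H43 (n : nat) (e : rel 'I_n) : Prop :=
  exists f : 'I_6 -> 'I_n, injective f /\ forall a b, H43 a b -> e (f a) (f b).

Definition H43_free (n : nat) (e : rel 'I_n) : Prop := ~ contains_H43 e.

Definition adj (R : realType) (n : nat) (e : rel 'I_n) : 'M[R]_n :=
  \matrix_(i, j) (e i j)%:R.

Definition is_spectral_radius (R : realType) (n : nat) (A : 'M[R]_n) (r : R) : Prop :=
  eigenvalue A r /\ forall s, eigenvalue A s -> s <= r.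

Definition is_perron_vector (R : realType) (n : nat) (A : 'M[R]_n) (r : R)
    (x : 'rV[R]_n) : Prop :=
  x *m A = r *: x /\ (forall i, 0 < x 0 i) /\ \sum_i (x 0 i) ^+ 2 = 1.

Definition admissible (n : nat) (e : rel 'I_n) (m : nat) : Prop :=
  simple_graph e /\ H43_free e /\ nedges e = m /\ no_isolated e.

(* Suppose w lies outside N[u*] and d(w) = 1, with neighbour v.  If v has no other
   neighbour, wv is an isolated edge and the eigen-equations at w and v force
   rho^2 = 1, whereas rho > 1 because the star K_{1,m} is admissible.  Otherwise
   rotate the edge wv to wu*.  The new graph is still admissible: the number of edges
   is unchanged, v keeps a neighbour, and w remains a leaf while every vertex of
   H(4,3) has degree 2.  Its Rayleigh quotient at x is rho + 2 x_w (x_u* - x_v) >= rho,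
   so by extremality x is an eigenvector for rho of the new adjacency matrix; but its
   equation at v has lost the term x_w > 0. *)

From HB Require Import structures.
From mathcomp Require Import all_boot all_order all_algebra.
From mathcomp Require Import reals.
From mathcomp Require Import ring lra.
From mathcomp Require Import complex spectral sesquilinear.
Import Order.TTheory GRing.Theory Num.Theory.

Set Implicit Arguments. Unset Strict Implicit. Unset Printing Implicit Defensive.
Local Open Scope ring_scope.

(** * The Rayleigh principle for real symmetric matrices *)

Lemma quad_ge0_lin0 (R : realFieldType) (a c : R) :
  0 <= c -> (forall t, 0 <= t * a + t ^+ 2 * c) -> a = 0.
Proof.
move=> c_ge0 ge0; pose k := (c + 1)^-1.
have k_gt0 : 0 < k by rewrite invr_gt0 ltr_wpDl.
have kc : k * (c + 1) = 1 by rewrite mulVf // lt0r_neq0 // ltr_wpDl.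
have := ge0 (- (a * k)).
have -> : - (a * k) * a + (- (a * k)) ^+ 2 * c =
          a ^+ 2 * k * (k * (c + 1) - 1) - (a * k) ^+ 2 by ring.
rewrite kc subrr mulr0 add0r oppr_ge0 => ak_le0.
have : (a * k) ^+ 2 == 0 by rewrite eq_le ak_le0 sqr_ge0.
by rewrite sqrf_eq0 mulf_eq0 (gt_eqF k_gt0) orbF => /eqP.
Qed.

Section QuadraticForms.
Variables (R : realFieldType) (n : nat).
Implicit Types (A N : 'M[R]_n) (x y z : 'rV[R]_n).

Definition qform A y : R := (y *m A *m y^T) 0 0.
Definition sqnorm y : R := (y *m y^T) 0 0.

Lemma sqnormE y : sqnorm y = \sum_i y 0 i ^+ 2.
Proof. by rewrite /sqnorm mxE; apply: eq_bigr => i _; rewrite mxE expr2. Qed.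

Lemma sqnorm_gt0 y : y != 0 -> 0 < sqnorm y.
Proof.
move=> y_neq0; have sq_ge0 i : true -> 0 <= y 0 i ^+ 2 by move=> _; exact: sqr_ge0.
rewrite lt_def sqnormE sumr_ge0 // andbT; apply: contra y_neq0 => /eqP y0.
apply/eqP/rowP => i; have /eqP := psumr_eq0P sq_ge0 y0 (i := i) isT.
by rewrite sqrf_eq0 mxE => /eqP.
Qed.

Lemma qformD A N y : qform (A + N) y = qform A y + qform N y.
Proof. by rewrite /qform mulmxDr mulmxDl !mxE. Qed.

Lemma qformB A N y : qform (A - N) y = qform A y - qform N y.
Proof. by rewrite /qform mulmxBr mulmxBl !mxE. Qed.

Lemma qform_scalar (r : R) y : qform r%:M y = r * sqnorm y.
Proof. by rewrite /qform /sqnorm mul_mx_scalar -scalemxAl mxE. Qed.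

Lemma qform_eigen A (r : R) y : y *m A = r *: y -> qform A y = r * sqnorm y.
Proof. by move=> yA; rewrite /qform yA -scalemxAl mxE. Qed.

Lemma bilin_sym N y z : N^T = N -> (y *m N *m z^T) 0 0 = (z *m N *m y^T) 0 0.
Proof.
move=> NT; transitivity ((y *m N *m z^T)^T 0 0); first by rewrite [RHS]mxE.
by rewrite !trmx_mul trmxK NT mulmxA.
Qed.

Lemma qformDZ N y z (t : R) : N^T = N ->
  qform N (y + t *: z) = qform N y + t * (2 * (y *m N *m z^T) 0 0) + t ^+ 2 * qform N z.
Proof.
move=> NT; rewrite /qform linearD /= linearZ /= !mulmxDl !mulmxDr -!scalemxAl -!scalemxAr.
have -> : z *m N *m y^T = y *m N *m z^T.
  by rewrite [LHS]mx11_scalar [RHS]mx11_scalar bilin_sym.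
by rewrite !mxE; ring.
Qed.

Lemma psd_qform_eq0 N x : N^T = N -> (forall y, 0 <= qform N y) ->
  qform N x = 0 -> x *m N = 0.
Proof.
move=> NT N_psd x0; set b := x *m N.
have /eqP : 2 * sqnorm b = 0.
  apply: (quad_ge0_lin0 (N_psd b)) => t.
  by have := N_psd (x + t *: b); rewrite qformDZ // x0 add0r.
rewrite mulf_eq0 pnatr_eq0 /=; apply: contraTeq => b_neq0.
exact: lt0r_neq0 (sqnorm_gt0 b_neq0).
Qed.

Lemma rayleigh_max_eigen A (r : R) x : A^T = A ->
  (forall y, qform A y <= r * sqnorm y) -> qform A x = r * sqnorm x -> x *m A = r *: x.
Proof.
move=> AT A_le x_eq; apply/esym/eqP.
rewrite -subr_eq0 -mul_mx_scalar -mulmxBr; apply/eqP.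
apply: psd_qform_eq0; first by rewrite linearB /= tr_scalar_mx AT.
  by move=> y; rewrite qformB qform_scalar subr_ge0.
by rewrite qformB qform_scalar x_eq subrr.
Qed.
End QuadraticForms.

Section SpectralDecomposition.
Local Open Scope sesquilinear_scope.
Variables (C : numClosedFieldType) (n : nat) (A P : 'M[C]_n) (d : 'rV[C]_n).
Hypotheses (P_unitary : P \is unitarymx) (A_diag : A = invmx P *m diag_mx d *m P).

Lemma spectral_row_eigen k : row k P *m A = d 0 k *: row k P.
Proof.
have P_unit := unitarymx_unit P_unitary.
rewrite A_diag -row_mul !mulmxA mulmxV // mul1mx row_mul row_diag_mx.
by rewrite -scalemxAl -rowE.
Qed.

Lemma spectral_row_neq0 k : row k P != 0.
Proof.
apply: contraTneq isT => Pk0.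
have : row k P *m invmx P = 0 by rewrite Pk0 mul0mx.
rewrite -row_mul mulmxV ?unitarymx_unit // row1 => /rowP /(_ k).
by rewrite !mxE !eqxx /= => /eqP; rewrite oner_eq0.
Qed.

Lemma spectral_form_le (r : C) (y : 'rV[C]_n) : (forall i, d 0 i <= r) ->
  (y *m A *m y ^t*) 0 0 <= r * (y *m y ^t*) 0 0.
Proof.
move=> d_le; pose z := y *m P ^t*.
have zT : z ^t* = P *m y ^t* by rewrite /z trmx_mul map_mxM trmxCK.
have -> : y *m A *m y ^t* = z *m diag_mx d *m z ^t*.
  by rewrite zT A_diag invmx_unitary // /z !mulmxA.
have -> : y *m y ^t* = z *m z ^t* by rewrite zT /z !mulmxA mulmxKtV.
rewrite !mxE mulr_sumr; apply: ler_sum => i _.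
rewrite mul_mx_diag !mxE -mulrA (mulrCA _ (d 0 i)).
by apply: ler_wpM2r; [exact: mul_conjC_ge0 | exact: d_le].
Qed.

End SpectralDecomposition.

Section RealSymmetric.
Local Open Scope complex_scope.

Lemma symmetric_eigen_rayleigh (R : rcfType) n (A : 'M[R]_n) : (0 < n)%N -> A^T = A ->
  exists r, eigenvalue A r /\ forall y, qform A y <= r * sqnorm y.
Proof.
move=> n_gt0 AT; pose Ac := map_mx (real_complex R) A.
have Ac_sym : Ac \is symmetricmx.
  apply/is_hermitianmxP; rewrite expr0 scale1r.
  by apply/matrixP=> i j; rewrite !mxE -[in RHS]AT mxE.
have Ac_real : Ac \is a realmx.
  by apply/mxOverP=> i j; rewrite mxE; apply/complex_realP; eexists.
have /orthomx_spectralP Ac_diag := symmetric_normalmx Ac_sym Ac_real.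
have P_unitary := spectral_unitarymx Ac.
have /mxOverP d_real := hermitian_spectral_diag_real (realsym_hermsym Ac_sym Ac_real).
move: Ac_diag P_unitary d_real; set P := spectralmx Ac; set d := spectral_diag Ac.
move=> Ac_diag P_unitary d_real; pose dr i := complex.Re (d 0 i).
have dE i : d 0 i = (dr i)%:C by rewrite RRe_real.
have [k _ k_max] := @arg_maxP _ R 'I_n (Ordinal n_gt0) xpredT dr isT.
exists (dr k); split.
  rewrite eigenvalue_root_char -(fmorph_root (real_complex R)) map_char_poly.
  rewrite -eigenvalue_root_char; apply/eigenvalueP; exists (row k P).
    by rewrite (spectral_row_eigen P_unitary Ac_diag) dE.
  exact: spectral_row_neq0.
move=> y; pose yc := map_mx (real_complex R) y.
have ycT : (yc ^t*)%sesqui = map_mx (real_complex R) y^T.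
  by apply/matrixP=> i j; rewrite !mxE; exact: conjc_real.
rewrite -lecR rmorphM /=.
have -> : (qform A y)%:C = (yc *m Ac *m (yc ^t*)%sesqui) 0 0.
  by rewrite ycT -!map_mxM mxE.
have -> : (sqnorm y)%:C = (yc *m (yc ^t*)%sesqui) 0 0.
  by rewrite ycT -!map_mxM mxE.
by apply: (spectral_form_le P_unitary Ac_diag) => i; rewrite !dE lecR; exact: k_max.
Qed.

End RealSymmetric.

Lemma symmetric_spectral_radius (R : realType) n (A : 'M[R]_n) : (0 < n)%N -> A^T = A ->
  exists r, is_spectral_radius A r /\ forall y, qform A y <= r * sqnorm y.
Proof.
move=> n_gt0 AT; have [r [r_eig r_max]] := symmetric_eigen_rayleigh n_gt0 AT.
exists r; split=> //; split=> // s /eigenvalueP [y yA y_neq0].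
by have := r_max y; rewrite (qform_eigen yA) ler_pM2r // sqnorm_gt0.
Qed.

(** * Admissible graphs *)

Lemma H43_two_nbrs (a : 'I_6) : exists b c, [/\ b != c, H43 a b & H43 a c].
Proof.
pose v k (k_lt6 : (k < 6)%N) : 'I_6 := Ordinal k_lt6.
case: a => [[|[|[|[|[|[|k]]]]]] a_lt6] //.
- by exists (v 1 isT), (v 3 isT).
- by exists (v 0 isT), (v 2 isT).
- by exists (v 1 isT), (v 3 isT).
- by exists (v 0 isT), (v 2 isT).
- by exists (v 0 isT), (v 5 isT).
- by exists (v 0 isT), (v 4 isT).
Qed.

Lemma H43_free_pendant n (e e' : rel 'I_n) (w u : 'I_n) :
  H43_free e -> (forall y, e' w y -> y = u) ->
  (forall a b, a != w -> b != w -> e' a b -> e a b) -> H43_free e'.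
Proof.
move=> e_free w_pendant e'_sub [f [f_inj f_e']].
have f_neq_w a : f a != w.
  apply/eqP => fa; have [b [c [bc ab ac]]] := H43_two_nbrs a.
  move: (f_e' _ _ ab) (f_e' _ _ ac); rewrite fa => /w_pendant fb /w_pendant fc.
  by move: bc; rewrite (f_inj _ _ (etrans fb (esym fc))) eqxx.
by apply: e_free; exists f; split=> // a b /f_e'; apply: e'_sub.
Qed.

Lemma adjT (R : realType) n (e : rel 'I_n) : symmetric e -> (adj R e)^T = adj R e.
Proof. by move=> e_sym; apply/matrixP => i j; rewrite !mxE e_sym. Qed.

Definition star m : rel 'I_m.+1 := fun a b => (a == ord0) != (b == ord0).
Arguments star : clear implicits.

Lemma star_admissible m : (2 <= m)%N -> admissible (star m) m.
Proof.
move=> m_ge2; split; [split|split; [|split]].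
- by move=> a b; rewrite /star eq_sym.
- by move=> a; rewrite /star eqxx.
- (* the triangle 0-4-5 cannot embed: every star edge has exactly one end at ord0 *)
  move=> [f [_ f_star]]; pose v k (k_lt6 : (k < 6)%N) : 'I_6 := Ordinal k_lt6.
  have := f_star (v 0 isT) (v 4 isT) isT; have := f_star (v 4 isT) (v 5 isT) isT.
  have := f_star (v 5 isT) (v 0 isT) isT; rewrite /star.
  by case: (f (v 0 isT) == ord0); case: (f (v 4 isT) == ord0);
     case: (f (v 5 isT) == ord0).
- rewrite /nedges.
  have -> : [set p : 'I_m.+1 * 'I_m.+1 | (p.1 < p.2)%N && star m p.1 p.2] =
            setX [set ord0] [set~ ord0].
    apply/setP => -[a b]; rewrite !inE /= /star.
    case: (a =P ord0) => [->|a0]; case: (b =P ord0) => [->|b0] //=.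
      by rewrite andbT lt0n; apply: contra_notN b0 => /eqP b0; apply: val_inj.
    by rewrite andbF.
  by rewrite cardsX cards1 cardsC1 card_ord mul1n.
- move=> a; apply/card_gt0P; case: (a =P ord0) => [->|a0].
    by exists (Ordinal (ltnW m_ge2 : (1 < m.+1)%N)); rewrite inE /star eqxx.
  by exists ord0; rewrite inE /star eqxx; case: (a =P ord0).
Qed.

Lemma delta_bilin (R : realFieldType) n (A : 'M[R]_n) (a b : 'I_n) :
  (('e_a : 'rV[R]_n) *m A *m ('e_b : 'rV[R]_n)^T) 0 0 = A a b.
Proof.
rewrite -rowE mxE (bigD1 b) //= big1 ?addr0; first by rewrite !mxE !eqxx mulr1.
by move=> j /negbTE jb; rewrite !mxE jb andbF mulr0.
Qed.

Lemma star_rayleigh_gt1 (R : realType) m (r : R) : (2 <= m)%N ->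
  (forall y, qform (adj R (star m)) y <= r * sqnorm y) -> 1 < r.
Proof.
move=> m_ge2 r_ub; pose v k (k_lt : (k < m.+1)%N) : 'I_m.+1 := Ordinal k_lt.
(* the test vector e_0 + e_1 + e_2 has Rayleigh quotient 4/3 *)
have := r_ub ('e_(v 0 isT) + 'e_(v 1 (ltnW m_ge2)) + 'e_(v 2 m_ge2)).
rewrite -[sqnorm _]mul1r -qform_scalar /qform !linearD /= !mulmxDl.
by rewrite ![(_ + _ : 'M[R]_1) 0 0]mxE !delta_bilin !mxE /star /=; lra.
Qed.

Definition admissible_radius_ub (R : realType) (m : nat) (rho : R) : Prop :=
  forall (n' : nat) (e' : rel 'I_n') (r' : R),
    admissible e' m -> is_spectral_radius (adj R e') r' -> r' <= rho.

Lemma admissible_radius_ub_gt1 (R : realType) m (rho : R) :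
  (2 <= m)%N -> admissible_radius_ub m rho -> 1 < rho.
Proof.
move=> m_ge2 rho_ub; have [[star_sym _] _] := star_admissible m_ge2.
have [r [r_rad r_ub]] := symmetric_spectral_radius (ltn0Sn m) (adjT R star_sym).
apply: lt_le_trans (star_rayleigh_gt1 m_ge2 r_ub) _.
exact: rho_ub (star_admissible m_ge2) r_rad.
Qed.

Lemma eigen_of_admissible_rayleigh (R : realType) m n (e : rel 'I_n) (rho : R) x :
  admissible_radius_ub m rho -> admissible e m -> sqnorm x = 1 ->
  rho <= qform (adj R e) x -> x *m adj R e = rho *: x.
Proof.
move=> rho_ub e_adm x_unit rho_le; have [[e_sym _] _] := e_adm.
have n_gt0 : (0 < n)%N.
  rewrite lt0n; apply/eqP => n0; move: x_unit; rewrite sqnormE big1 => [/eqP|i].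
    by rewrite eq_sym oner_eq0.
  by exfalso; case: i => k; rewrite n0.
have [r [r_rad r_ub]] := symmetric_spectral_radius n_gt0 (adjT R e_sym).
have r_le := rho_ub _ _ _ e_adm r_rad.
have q_le := r_ub x; rewrite x_unit mulr1 in q_le.
have r_eq : r = rho by apply/le_anti; rewrite r_le (le_trans rho_le q_le).
rewrite -r_eq; apply: rayleigh_max_eigen (adjT R e_sym) r_ub _.
by rewrite x_unit mulr1; apply/le_anti; rewrite q_le r_eq rho_le.
Qed.

(** * Rotating a pendant edge *)

Definition same_edge n (c d a b : 'I_n) : bool :=
  ((a == c) && (b == d)) || ((a == d) && (b == c)).

Lemma same_edge_sym n (c d a b : 'I_n) : same_edge c d a b = same_edge c d b a.
Proof. by rewrite /same_edge orbC; congr (_ || _); rewrite andbC. Qed.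

Lemma same_edge_inj n (c d d' a b : 'I_n) :
  c != d -> same_edge c d a b -> same_edge c d' a b -> d = d'.
Proof.
move=> c_neq_d /orP [] /andP [/eqP -> /eqP ->] /orP [] /andP [/eqP c_eq /eqP d_eq] //.
- by move: c_neq_d; rewrite d_eq eqxx.
- by move: c_neq_d; rewrite c_eq eqxx.
Qed.

Definition edge_pair n (a b : 'I_n) : 'I_n * 'I_n :=
  if (a < b)%N then (a, b) else (b, a).

Lemma same_edge_pairE n (c d : 'I_n) (p : 'I_n * 'I_n) : c != d ->
  ((p.1 < p.2)%N && same_edge c d p.1 p.2) = (p == edge_pair c d).
Proof.
case: p => a b /= c_neq_d; rewrite /edge_pair /same_edge.
case: (ltngtP c d) => [c_lt_d | d_lt_c | /val_inj c_eq_d];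
  last by rewrite c_eq_d eqxx in c_neq_d.
- apply/idP/eqP => [/andP [a_lt_b] | [-> ->]]; last by rewrite c_lt_d !eqxx.
  case/orP => /andP [/eqP a_eq /eqP b_eq]; rewrite a_eq b_eq // in a_lt_b *.
  by move: (ltn_trans a_lt_b c_lt_d); rewrite ltnn.
- apply/idP/eqP => [/andP [a_lt_b] | [-> ->]]; last by rewrite d_lt_c !eqxx orbT.
  case/orP => /andP [/eqP a_eq /eqP b_eq]; rewrite a_eq b_eq // in a_lt_b *.
  by move: (ltn_trans a_lt_b d_lt_c); rewrite ltnn.
Qed.

Section SymDelta.
Variables (R : realFieldType) (n : nat).

Definition sym_delta (c d : 'I_n) : 'M[R]_n := delta_mx c d + delta_mx d c.

Lemma sym_deltaE c d i j : c != d -> sym_delta c d i j = (same_edge c d i j)%:R.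
Proof.
move=> c_neq_d; rewrite !mxE /same_edge.
by case: (i =P c) => [->|_]; rewrite ?(negbTE c_neq_d) /= ?addr0 ?orbF ?add0r.
Qed.

Lemma row_mul_delta (x : 'rV[R]_n) a b j :
  (x *m (delta_mx a b : 'M_n)) 0 j = x 0 a * (j == b)%:R.
Proof.
rewrite mxE (bigD1 a) //= big1 ?addr0; first by rewrite mxE eqxx.
by move=> i /negbTE i_neq_a; rewrite mxE i_neq_a mulr0.
Qed.

Lemma qform_delta (x : 'rV[R]_n) a b : qform (delta_mx a b) x = x 0 a * x 0 b.
Proof.
rewrite /qform mxE (bigD1 b) //= big1 ?addr0; first by rewrite row_mul_delta eqxx mulr1 mxE.
by move=> j /negbTE j_neq_b; rewrite row_mul_delta j_neq_b mulr0 mul0r.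
Qed.

Lemma row_sym_delta (x : 'rV[R]_n) c d j :
  (x *m sym_delta c d) 0 j = x 0 c * (j == d)%:R + x 0 d * (j == c)%:R.
Proof. by rewrite mulmxDr mxE !row_mul_delta. Qed.

Lemma qform_sym_delta (x : 'rV[R]_n) c d : qform (sym_delta c d) x = 2 * x 0 c * x 0 d.
Proof. by rewrite qformD !qform_delta; ring. Qed.

End SymDelta.

Section RotateEdge.
Variables (n : nat) (e : rel 'I_n) (w v u : 'I_n).

Definition rotate_edge : rel 'I_n :=
  fun a b => (e a b && ~~ same_edge w v a b) || same_edge w u a b.

Hypotheses (e_sym : symmetric e) (e_wv : e w v) (not_e_wu : ~~ e w u).
Hypotheses (w_neq_v : w != v) (w_neq_u : w != u).

Let u_neq_v : u != v.
Proof. by apply: contraNneq not_e_wu => ->. Qed.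

Lemma rotate_edge_sym : symmetric rotate_edge.
Proof. by move=> a b; rewrite /rotate_edge e_sym same_edge_sym (same_edge_sym w u). Qed.

Lemma rotate_edge_irr : irreflexive e -> irreflexive rotate_edge.
Proof.
move=> e_irr a; rewrite /rotate_edge e_irr /= /same_edge.
by apply/negP => /orP [] /andP [/eqP -> /eqP a_eq]; move: w_neq_u; rewrite a_eq eqxx.
Qed.

Lemma rotate_edge_sub a b : a != w -> b != w -> rotate_edge a b -> e a b.
Proof.
move=> /negbTE a_neq_w /negbTE b_neq_w.
by rewrite /rotate_edge /same_edge a_neq_w b_neq_w /= ?andbF ?orbF => /andP [].
Qed.

Lemma nedges_rotate_edge : nedges rotate_edge = nedges e.
Proof.
rewrite /nedges; set S := [set p : 'I_n * 'I_n | (p.1 < p.2)%N && e p.1 p.2].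
have -> : [set p : 'I_n * 'I_n | (p.1 < p.2)%N && rotate_edge p.1 p.2] =
          edge_pair w u |: (S :\ edge_pair w v).
  apply/setP => p; rewrite !inE /rotate_edge.
  rewrite -(same_edge_pairE p w_neq_u) -(same_edge_pairE p w_neq_v).
  by case: (p.1 < p.2)%N => //=; rewrite orbC andbC.
have pair_in_S c d : c != d -> (edge_pair c d \in S) = e c d.
  move=> c_neq_d; have := same_edge_pairE (edge_pair c d) c_neq_d; rewrite eqxx inE.
  by case/andP=> -> /orP [] /andP [/eqP -> /eqP ->] //; rewrite e_sym.
rewrite cardsU1 [in RHS](cardsD1 (edge_pair w v)) in_setD1 !pair_in_S //.
by rewrite e_wv (negbTE not_e_wu) andbF.
Qed.

Lemma adj_rotate_edge (R : realType) :
  adj R rotate_edge = adj R e + sym_delta R w u - sym_delta R w v.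
Proof.
apply/matrixP => i j; rewrite [RHS]mxE [(adj R e + _) i j]mxE [(- _ : 'M[R]_n) i j]mxE.
rewrite !sym_deltaE // !mxE /rotate_edge.
have [wv_ij | not_wv_ij] := boolP (same_edge w v i j).
  have -> : e i j by case/orP: wv_ij => /andP [/eqP -> /eqP ->]; rewrite // e_sym.
  have -> : same_edge w u i j = false.
    by apply: contraNF u_neq_v => /(same_edge_inj w_neq_v wv_ij) ->.
  by rewrite /= addr0 subrr.
rewrite andbT subr0; have [wu_ij | _] := boolP (same_edge w u i j).
  have -> : e i j = false.
    case/orP: wu_ij => /andP [/eqP -> /eqP ->]; first exact: negbTE not_e_wu.
    by rewrite e_sym (negbTE not_e_wu).
  by rewrite add0r.
by rewrite orbF addr0.
Qed.

Lemma qform_rotate_edge (R : realType) (x : 'rV[R]_n) :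
  qform (adj R rotate_edge) x = qform (adj R e) x + 2 * x 0 w * (x 0 u - x 0 v).
Proof. by rewrite adj_rotate_edge qformB qformD !qform_sym_delta; ring. Qed.

Lemma row_adj_rotate_edge (R : realType) (x : 'rV[R]_n) :
  (x *m adj R rotate_edge) 0 v = (x *m adj R e) 0 v - x 0 w.
Proof.
rewrite adj_rotate_edge mulmxBr mulmxDr [(_ - _ : 'rV[R]_n) 0 v]mxE.
rewrite [(_ + _ : 'rV[R]_n) 0 v]mxE [(- _ : 'rV[R]_n) 0 v]mxE !row_sym_delta eqxx.
by rewrite (eq_sym v u) (negbTE u_neq_v) (eq_sym v w) (negbTE w_neq_v) /= mulr1 !mulr0 !addr0.
Qed.

Lemma rotate_edge_admissible m (z : 'I_n) :
  admissible e m -> (forall y, e w y = (y == v)) -> e v z -> z != w ->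
  admissible rotate_edge m.
Proof.
move=> [[_ e_irr] [e_free [e_m e_noiso]]] w_nbr e_vz z_neq_w.
split; [split|split; [|split]].
- exact: rotate_edge_sym.
- exact: rotate_edge_irr.
- apply: (H43_free_pendant (w := w) (u := u) e_free _ rotate_edge_sub) => y.
  rewrite /rotate_edge /same_edge w_nbr !eqxx (negbTE w_neq_v) (negbTE w_neq_u) /=.
  by rewrite orbF andbN /= orbF => /eqP.
- by rewrite nedges_rotate_edge.
- move=> a; apply/card_gt0P; rewrite /rotate_edge /same_edge.
  case: (a =P w) => [-> | _].
    by exists u; rewrite inE !eqxx orbT.
  case: (a =P v) => [-> | _].
    by exists z; rewrite inE e_vz (negbTE z_neq_w) /= ?andbF.
  have /card_gt0P [b] := e_noiso a; rewrite !inE => e_ab.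
  by exists b; rewrite inE e_ab /= ?andbF.
Qed.

End RotateEdge.

Lemma deg_eq1_nbr n (e : rel 'I_n) (w : 'I_n) :
  deg e w = 1%N -> exists v, forall y, e w y = (y == v).
Proof.
rewrite /deg => /eqP/cards1P [v w_nbr]; exists v => y.
by have := congr1 (fun S : {set 'I_n} => y \in S) w_nbr; rewrite !inE.
Qed.

Lemma perron_leaf (R : realType) n (e : rel 'I_n) (rho : R) (x : 'rV[R]_n) (w v : 'I_n) :
  symmetric e -> x *m adj R e = rho *: x -> (forall y, e w y = (y == v)) ->
  rho * x 0 w = x 0 v.
Proof.
move=> e_sym xA w_nbr; have := congr1 (fun y : 'rV[R]_n => y 0 w) xA; rewrite !mxE => <-.
rewrite (bigD1 v) //= big1 => [|j j_neq_v]; rewrite mxE e_sym w_nbr.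
  by rewrite eqxx mulr1 addr0.
by rewrite (negbTE j_neq_v) mulr0.
Qed.

Lemma perron_isolated_edge (R : realType) n (e : rel 'I_n) (rho : R) (x : 'rV[R]_n) (w v : 'I_n) :
  symmetric e -> x *m adj R e = rho *: x -> 0 < x 0 w ->
  (forall y, e w y = (y == v)) -> (forall y, e v y = (y == w)) -> rho ^+ 2 = 1.
Proof.
move=> e_sym xA xw_gt0 w_nbr v_nbr.
have rho_xw := perron_leaf e_sym xA w_nbr; have rho_xv := perron_leaf e_sym xA v_nbr.
apply: (mulIf (lt0r_neq0 xw_gt0)).
by rewrite mul1r expr2 -mulrA rho_xw rho_xv.
Qed.

Theorem mainTheorem4 (R : realType) (m n : nat) (e : rel 'I_n) (rho : R)
    (x : 'rV[R]_n) (ustar : 'I_n) :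
  (38 <= m)%N ->
  admissible e m ->
  is_spectral_radius (adj R e) rho ->
  (forall (n' : nat) (e' : rel 'I_n') (r' : R),
      admissible e' m -> is_spectral_radius (adj R e') r' -> r' <= rho) ->
  is_perron_vector (adj R e) rho x ->
  (forall u, x 0 u <= x 0 ustar) ->
  forall w, w \in ~: closed_nbhd e ustar -> (2 <= deg e w)%N.
Proof.
move=> m_ge38 e_adm _ rho_ub [xA [x_pos x_sum]] x_max w.
have [[e_sym e_irr] [_ [_ e_noiso]]] := e_adm.
have x_unit : sqnorm x = 1 by rewrite sqnormE.
have rho_gt1 : 1 < rho := admissible_radius_ub_gt1 (leq_trans (isT : (2 <= 38)%N) m_ge38) rho_ub.
rewrite in_setC in_setU1 inE negb_or => /andP [w_neq_u not_e_uw].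
rewrite leqNgt; apply/negP => deg_lt2.
have [v w_nbr] : exists v, forall y, e w y = (y == v).
  by apply: deg_eq1_nbr; move: (e_noiso w) deg_lt2; case: (deg e w) => [|[|]].
have e_wv : e w v by rewrite w_nbr.
have w_neq_v : w != v by apply: contraTneq e_wv => ->; rewrite e_irr.
have not_e_wu : ~~ e w ustar by rewrite e_sym.
have [/existsP [z /andP [e_vz z_neq_w]] | ] := boolP [exists z, e v z && (z != w)].
  have e'_adm := rotate_edge_admissible e_sym e_wv not_e_wu w_neq_v w_neq_u
                   e_adm w_nbr e_vz z_neq_w.
  have x_eig : x *m adj R (rotate_edge e w v ustar) = rho *: x.
    apply: (eigen_of_admissible_rayleigh rho_ub e'_adm x_unit).
    rewrite qform_rotate_edge // (qform_eigen xA) x_unit mulr1 lerDl.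
    by rewrite !mulr_ge0 ?subr_ge0 ?x_max // ltW.
  have := congr1 (fun y : 'rV[R]_n => y 0 v) x_eig; rewrite /= row_adj_rotate_edge // xA !mxE.
  by have := x_pos w; lra.
rewrite negb_exists => /forallP v_leaf.
have v_nbr y : e v y = (y == w).
  apply/idP/eqP => [e_vy | ->]; last by rewrite e_sym.
  by move: (v_leaf y); rewrite e_vy => /negPn/eqP.
by have := perron_isolated_edge e_sym xA (x_pos w) w_nbr v_nbr; nra.
Qed.
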